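(* Let $G$ be a finite nilpotent group of nilpotency class $2$ and $w\in F_k$. The following are equivalent: (i) the word map $w:G^k\to G$ is surjective; (ii) $w$ is $F_k(G)$-automorphic to a primitive word; (iii) $w$ is identically distributed on $G$ to a primitive word.
   Context: $F_k$ is the free group on $x_1,\dots,x_k$; a word is primitive if it belongs to some free basis of $F_k$ (equivalently, it is the image of $x_1$ under an automorphism of $F_k$). $P_{w,G}(g):=|\{(g_1,\dots,g_k)\in G^k: w(g_1,\dots,g_k)=g\}|/|G|^k$; two words (possibly in different numbers of variables) are identically distributed on $G$ if their functions $P_{\cdot,G}$ coincide on $G$. The group $F_k(G)$ consists of the word maps $G^k\to G$ induced by elements of $F_k$, under pointwise multiplication; $w_1,w_2\in F_k$ are $F_k(G)$-automorphic if some group automorphism of $F_k(G)$ sends the word map of $w_1$ to that of $w_2$. *)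

From HB Require Import structures.
From mathcomp Require Import all_boot all_order all_algebra all_fingroup all_solvable.
Set Implicit Arguments. Unset Strict Implicit. Unset Printing Implicit Defensive.

(* Free group F_k modelled by words over letters (i, b) :
   x_i if b = false, x_i^-1 if b = true; two words denote the same element of
   F_k iff their free reductions coincide. *)

Definition letter (k : nat) := ('I_k * bool)%type.
Definition word (k : nat) := seq (letter k).

Definition inv_letter k (a : letter k) : letter k := (a.1, ~~ a.2).
Definition inv_word k (u : word k) : word k := rev (map (@inv_letter k) u).

Fixpoint reduce k (u : word k) : word k :=
  match u with
  | [::] => [::]
  | a :: s =>
      match reduce s with
      | b :: r => if b == inv_letter a then r else a :: b :: r
      | [::] => [:: a]
      end
  end.

Definition feq k (u v : word k) : Prop := reduce u = reduce v.

Definition gen k (i : 'I_k) : word k := [:: (i, false)].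

Definition subst k m (phi : 'I_k -> word m) (w : word k) : word m :=
  flatten (map (fun a : letter k => if a.2 then inv_word (phi a.1) else phi a.1) w).

Definition is_aut k (phi psi : {ffun 'I_k -> word k}) : Prop :=
  (forall i, feq (subst phi (psi i)) (gen i)) /\
  (forall i, feq (subst psi (phi i)) (gen i)).

Definition primitive_word k (w : word k) : Prop :=
  exists (phi psi : {ffun 'I_k -> word k}), is_aut phi psi /\
    exists i : 'I_k, nat_of_ord i = 0%N /\ feq (phi i) w.

Section WordMaps.
Variable gT : finGroupType.
Local Open Scope group_scope.

Definition weval k (x : {ffun 'I_k -> gT}) (w : word k) : gT :=
  foldr (fun a acc => (if a.2 then (x a.1)^-1 else x a.1) * acc) 1 w.

Definition wmap_type k := {ffun {ffun 'I_k -> gT} -> gT}.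

Definition wmap k (w : word k) : wmap_type k := [ffun x => weval x w].

Definition fmul k (f g : wmap_type k) : wmap_type k := [ffun x => f x * g x].

Definition in_FkG k (f : wmap_type k) : Prop := exists u : word k, f = wmap u.

Definition FkG_aut k (alpha : wmap_type k -> wmap_type k) : Prop :=
  [/\ forall f, in_FkG f -> in_FkG (alpha f),
      forall f g, in_FkG f -> in_FkG g -> alpha (fmul f g) = fmul (alpha f) (alpha g),
      forall f g, in_FkG f -> in_FkG g -> alpha f = alpha g -> f = g
    & forall g, in_FkG g -> exists2 f, in_FkG f & alpha f = g].

Definition FkG_automorphic k (w1 w2 : word k) : Prop :=
  exists alpha, FkG_aut alpha /\ alpha (wmap w1) = wmap w2.

Definition word_surj k (w : word k) : Prop :=
  forall g : gT, exists x : {ffun 'I_k -> gT}, weval x w = g.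

Definition Pw k (w : word k) (g : gT) : rat :=
  ((#|[set x : {ffun 'I_k -> gT} | weval x w == g]|)%:R / (#|gT| ^ k)%:R)%R.

Definition ident_distr k m (w : word k) (v : word m) : Prop :=
  forall g : gT, Pw w g = Pw v g.

End WordMaps.

From HB Require Import structures.
From mathcomp Require Import all_boot all_order all_algebra all_fingroup all_solvable.
From Stdlib Require Import Classical.

Set Implicit Arguments. Unset Strict Implicit. Unset Printing Implicit Defensive.

(* Let n = |G| and let e_i(w) be the exponent sums of w.

   If gcd(n, e_1(w), ..., e_k(w)) = 1, pick weights T_i with T_0 = 1 and
   E = sum_i T_i e_i(w) coprime to n.  Since commutators are central, the substitution
   x_0 |-> w, x_i |-> x_i x_0^-T_i (i > 0) is a bijection of G^k; its inverse is again a
   substitution, so precomposition with it is an automorphism of F_k(G) sending w to the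
   primitive word x_0, and w is distributed like x_0.

   Otherwise a prime p of n divides every e_i(w), so w lies in the subgroup of F_k(G)
   generated by commutators and p-th powers.  That subgroup is characteristic, and
   evaluates into the preimage of the Frattini subgroup of G / O_p'(G), which is proper
   since G is nilpotent; hence neither w nor any word F_k(G)-automorphic to w is
   surjective, whereas primitive words are. *)

Section WordEvaluation.
Variable gT : finGroupType.
Local Open Scope group_scope.

Definition leval k (x : {ffun 'I_k -> gT}) (a : letter k) : gT :=
  if a.2 then (x a.1)^-1 else x a.1.

Lemma weval_cons k (x : {ffun 'I_k -> gT}) a u :
  weval x (a :: u) = leval x a * weval x u.
Proof. by []. Qed.

Lemma weval_cat k (x : {ffun 'I_k -> gT}) (u v : word k) :
  weval x (u ++ v) = weval x u * weval x v.
Proof. by elim: u => [|a u IH]; rewrite ?mul1g //= -mulgA -IH. Qed.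

Lemma leval_inv k (x : {ffun 'I_k -> gT}) a : leval x (inv_letter a) = (leval x a)^-1.
Proof. by rewrite /leval /=; case: a.2; rewrite ?invgK. Qed.

Lemma weval_inv k (x : {ffun 'I_k -> gT}) (u : word k) :
  weval x (inv_word u) = (weval x u)^-1.
Proof.
elim: u => [|a u IH]; first by rewrite invg1.
rewrite /inv_word /= rev_cons -cats1 weval_cat -/(inv_word u) IH.
by rewrite weval_cons mulg1 leval_inv invMg.
Qed.

Lemma weval_reduce k (x : {ffun 'I_k -> gT}) (u : word k) :
  weval x (reduce u) = weval x u.
Proof.
elim: u => [|a u IH] //=; move: IH; case: (reduce u) => [|b r] <- //.
case: eqP => [->|_] //; rewrite -/(leval x a) -/(weval x r).
by rewrite weval_cons leval_inv mulKVg.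
Qed.

Lemma feq_weval k (x : {ffun 'I_k -> gT}) (u v : word k) :
  feq u v -> weval x u = weval x v.
Proof. by move=> uv; rewrite -weval_reduce uv weval_reduce. Qed.

Lemma weval_gen k (x : {ffun 'I_k -> gT}) i : weval x (gen i) = x i.
Proof. exact: mulg1. Qed.

Lemma weval_subst k m (phi : 'I_k -> word m) (x : {ffun 'I_m -> gT}) (u : word k) :
  weval x (subst phi u) = weval [ffun i => weval x (phi i)] u.
Proof.
elim: u => [|a u IH] //=; rewrite weval_cat -IH ffunE.
by case: a.2; rewrite ?weval_inv.
Qed.

Lemma weval_nseq_inv k (x : {ffun 'I_k -> gT}) i m :
  weval x (nseq m (i, true)) = (x i)^-1 ^+ m.
Proof. by elim: m => [|m IH] //=; rewrite IH expgS. Qed.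

Lemma mem_weval k (H : {group gT}) (x : {ffun 'I_k -> gT}) (u : word k) :
  (forall i, x i \in H) -> weval x u \in H.
Proof.
move=> xH; elim: u => [|a u IH]; rewrite ?group1 // weval_cons groupM //.
by rewrite /leval; case: a.2; rewrite ?groupV.
Qed.

Lemma morph_weval (rT : finGroupType) (D : {group gT}) (f : {morphism D >-> rT})
    k (x : {ffun 'I_k -> gT}) (u : word k) :
  (forall i, x i \in D) -> f (weval x u) = weval [ffun i => f (x i)] u.
Proof.
move=> xD; elim: u => [|a u IH]; first exact: morph1.
have aD : leval x a \in D by rewrite /leval; case: a.2; rewrite ?groupV.
rewrite !weval_cons morphM ?mem_weval // IH; congr (_ * _).
by rewrite /leval ffunE; case: a.2; rewrite ?morphV.
Qed.

End WordEvaluation.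

(* Exponent sum of x_i in w, with x_i^-1 counted as n - 1, i.e. as -1 modulo n. *)
Definition exp_sum n k (w : word k) (i : nat) : nat :=
  \sum_(a <- w | a.1 == i :> nat) (if a.2 then n.-1 else 1).

Lemma exp_sum_cons n k (a : letter k) (w : word k) i :
  exp_sum n (a :: w) i = (a.1 == i :> nat) * (if a.2 then n.-1 else 1) + exp_sum n w i.
Proof. by rewrite /exp_sum big_cons; case: eqP; rewrite ?mul1n. Qed.

Section GroupOrder.
Variable gT : finGroupType.
Local Open Scope group_scope.

Lemma card_finGroup_gt0 : 0 < #|gT|.
Proof. by apply/card_gt0P; exists 1. Qed.

Lemma expg_card (g : gT) : g ^+ #|gT| = 1.
Proof. by rewrite -cardsT expg_cardG ?inE. Qed.

Lemma invg_expg_pred (g : gT) n : 0 < n -> g ^+ n = 1 -> g^-1 = g ^+ n.-1.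
Proof. by move=> n_gt0 gn; apply: (mulgI g); rewrite mulgV -expgS prednK. Qed.

Lemma expg_coprime_inj E : coprime E #|gT| -> injective (fun g : gT => g ^+ E).
Proof.
rewrite coprime_sym -cardsT => coE g1 g2.
by apply: (can_in_inj (expgK coE)); rewrite inE.
Qed.

End GroupOrder.

Section CommutingEvaluation.
Variable gT : finGroupType.
Local Open Scope group_scope.

Lemma weval_commuting n k (y : {ffun 'I_k -> gT}) (w : word k) :
    0 < n -> (forall i j, commute (y i) (y j)) -> (forall i, y i ^+ n = 1) ->
  weval y w = \prod_(i < k) y i ^+ exp_sum n w i.
Proof.
move=> n_gt0 cy yn; elim: w => [|a w IH].
  by rewrite big1 // => i _; rewrite /exp_sum big_nil.
under eq_bigr => i _ do rewrite exp_sum_cons expgD.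
rewrite weval_cons IH prodgM_commute; last by move=> i j _ _; apply: commuteX2.
congr (_ * _); set s := if a.2 then n.-1 else 1%N.
have -> : \prod_(i < k) y i ^+ ((a.1 == i :> nat) * s)%N = \prod_(i < k | i == a.1) y i ^+ s.
  rewrite [RHS]big_mkcond; apply: eq_bigr => i _; rewrite val_eqE eq_sym.
  by case: eqP; rewrite ?mul1n ?mul0n.
by rewrite big_pred1_eq /leval /s; case: a.2; rewrite // (invg_expg_pred n_gt0).
Qed.

End CommutingEvaluation.

(* The largest divisor of n coprime to s; note coprime_part n 0 = 1. *)
Definition coprime_part n s := n`_[pred q | ~~ (q %| s)].

Fixpoint greedy_sum n (c : nat -> nat) m :=
  if m is m'.+1 then greedy_sum n c m' + coprime_part n (greedy_sum n c m') * c m' else 0.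

Section CoprimeCombination.
Variables (n : nat) (c : nat -> nat).
Hypothesis n_gt0 : 0 < n.

Lemma coprime_part0 : coprime_part n 0 = 1.
Proof.
apply: part_p'nat; rewrite /pnat n_gt0; apply/allP=> q _.
by rewrite !inE dvdn0.
Qed.

Lemma dvdn_coprime_part p s : prime p -> p %| n -> (p %| coprime_part n s) = ~~ (p %| s).
Proof.
move=> p_pr pn; have := pi_of_part [pred q | ~~ (q %| s)] n_gt0 p.
by rewrite !inE /= !mem_primes p_pr n_gt0 pn part_gt0.
Qed.

Lemma dvdn_greedy_sum p m : prime p -> p %| n ->
  (p %| greedy_sum n c m) = all (fun j => p %| c j) (iota 0 m).
Proof.
move=> p_pr pn; elim: m => [|m IH]; first exact: dvdn0.
have -> : iota 0 m.+1 = iota 0 m ++ [:: m] by rewrite -addn1 iotaD.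
rewrite all_cat /= andbT -IH.
case: (boolP (p %| greedy_sum n c m)) => pS.
  by rewrite dvdn_addr // Euclid_dvdM // dvdn_coprime_part // pS.
by rewrite dvdn_addl ?dvdn_mulr ?dvdn_coprime_part // (negbTE pS).
Qed.

Lemma greedy_sumE m :
  greedy_sum n c m = \sum_(j < m) coprime_part n (greedy_sum n c j) * c j.
Proof. by elim: m => [|m IH]; rewrite ?big_ord0 // big_ord_recr /= IH. Qed.

(* Greedily choosing the weights T j = coprime_part n (greedy_sum n c j) keeps every
   prime p of n dividing the partial sum exactly while p divides all c's seen so far. *)
Lemma coprime_combination m :
    (forall p, prime p -> p %| n -> exists2 j, j < m & ~~ (p %| c j)) ->
  exists2 T : nat -> nat, T 0 = 1 & coprime (\sum_(j < m) T j * c j) n.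
Proof.
move=> c_p'; exists (fun j => coprime_part n (greedy_sum n c j)); first exact: coprime_part0.
rewrite -greedy_sumE; apply: contraT => ncop.
have gcd_gt1 : 1 < gcdn (greedy_sum n c m) n.
  by rewrite ltn_neqAle eq_sym ncop gcdn_gt0 n_gt0 orbT.
have p_pr := pdiv_prime gcd_gt1; have p_gcd := pdiv_dvd (gcdn (greedy_sum n c m) n).
have pn := dvdn_trans p_gcd (dvdn_gcdr _ _).
have [j jm /negP[]] := c_p' _ p_pr pn.
have := dvdn_trans p_gcd (dvdn_gcdl _ _); rewrite dvdn_greedy_sum // => /allP; apply.
by rewrite mem_iota.
Qed.

End CoprimeCombination.

Lemma weighted_exp_sum_cons n k (T : 'I_k -> nat) (a : letter k) (w : word k) :
  \sum_(i < k) T i * exp_sum n (a :: w) i =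
  T a.1 * (if a.2 then n.-1 else 1) + \sum_(i < k) T i * exp_sum n w i.
Proof.
under eq_bigr => i _ do rewrite exp_sum_cons mulnDr.
rewrite big_split /=; congr (_ + _); set s := if a.2 then n.-1 else 1.
rewrite (eq_bigr (fun i => if i == a.1 then T i * s else 0)) -?big_mkcond ?big_pred1_eq //.
by move=> i _; rewrite val_eqE eq_sym; case: eqP; rewrite ?mul1n ?muln0.
Qed.

Section ClassTwo.
Variable gT : finGroupType.
Local Open Scope group_scope.
Hypothesis central_comm : forall x y z : gT, commute [~ x, y] z.
Local Notation n := #|gT|.

Lemma commg_class2_XVM (g a z : gT) m : [~ g, a^-1 ^+ m * z] = [~ a, g ^+ m] * [~ g, z].
Proof.
have cz : [~ g, a^-1 ^+ m] ^ z = [~ g, a^-1 ^+ m].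
  exact/conjg_fixP/commgP/central_comm.
have cc x y : commute y [~ x, y] := commute_sym (central_comm x y y).
rewrite commgMJ cz central_comm; congr (_ * _).
by rewrite !(commgX m (cc _ _)) (commgV (cc _ _)) invgR.
Qed.

Lemma mulg_class2_form (a g z c : gT) m :
  a * (g ^+ m * [~ g, z] * c) = g ^+ m * [~ g, a^-1 ^+ m * z] * (a * c).
Proof.
rewrite commg_class2_XVM; set d := [~ g, z]; set e := [~ a, g ^+ m].
have ag : a * g ^+ m = g ^+ m * a * e by rewrite commgC.
have ce x : e * x = x * e := central_comm _ _ x.
have cd x : d * x = x * d := central_comm _ _ x.
clearbody d e; rewrite !mulgA ag -!mulgA; congr (_ * _).
by rewrite mulgA -ce -mulgA; congr (_ * _); rewrite mulgA -cd -mulgA.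
Qed.

Lemma class2_form k (T : 'I_k -> nat) (b : {ffun 'I_k -> gT}) (w : word k) :
  exists z c, forall g, weval [ffun i => b i * g ^+ T i] w =
    g ^+ (\sum_(i < k) T i * exp_sum n w i) * [~ g, z] * c.
Proof.
have mulX (g d c : gT) t e : g ^+ t * (g ^+ e * d * c) = g ^+ (t + e) * d * c.
  by rewrite !mulgA expgD.
elim: w => [|[i []] w [z [c IH]]].
- by exists 1, 1 => g; rewrite big1 ?commg1 ?mulg1 // => i _; rewrite /exp_sum big_nil muln0.
- exists (b i ^+ (\sum_(j < k) T j * exp_sum n w j) * z), ((b i)^-1 * c) => g.
  have inv_pow : (g ^+ T i)^-1 = g ^+ (T i * n.-1).
    by rewrite -expgVn (invg_expg_pred (card_finGroup_gt0 gT) (expg_card g)) -expgM mulnC.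
  rewrite weval_cons /leval ffunE IH invMg inv_pow -mulgA mulg_class2_form invgK mulX.
  by rewrite weighted_exp_sum_cons.
- exists ((b i)^-1 ^+ (T i + \sum_(j < k) T j * exp_sum n w j) * z), (b i * c) => g.
  rewrite weval_cons /leval ffunE IH -mulgA mulX mulg_class2_form.
  by rewrite weighted_exp_sum_cons muln1.
Qed.

Lemma class2_form_inj E (z c : gT) : coprime E n ->
  injective (fun g : gT => g ^+ E * [~ g, z] * c).
Proof.
move=> coE g1 g2 /mulIg eq12.
have commE g : [~ g ^+ E * [~ g, z], z] = [~ g, z] ^+ E.
  have cz x : commute x [~ g, z] := commute_sym (central_comm g z x).
  rewrite commMgJ (commXg E (cz g)).
  have -> : [~ g, z] ^+ E ^ [~ g, z] = [~ g, z] ^+ E by apply/conjg_fixP/commgP.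
  by have /commgP/eqP -> := central_comm g z z; rewrite mulg1.
have comm12 : [~ g1, z] = [~ g2, z] by apply: (expg_coprime_inj coE); rewrite -!commE eq12.
by move: eq12; rewrite comm12 => /mulIg/(expg_coprime_inj coE).
Qed.

End ClassTwo.

Lemma primitive_gen0 k (i : 'I_k) : nat_of_ord i = 0 -> primitive_word (gen i).
Proof.
move=> i0; exists [ffun j => gen j], [ffun j => gen j]; split; last by exists i; rewrite ffunE.
by split=> j; rewrite /feq ffunE /subst /= ffunE cats0.
Qed.

Section SubstitutionMaps.
Variables (gT : finGroupType) (k : nat).
Local Open Scope group_scope.

Definition subst_map (theta : 'I_k -> word k) (x : {ffun 'I_k -> gT}) : {ffun 'I_k -> gT} :=
  [ffun i => weval x (theta i)].

Lemma subst_map_gen : subst_map (@gen k) =1 id.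
Proof. by move=> x; apply/ffunP=> i; rewrite ffunE weval_gen. Qed.

Lemma subst_map_comp theta eta x :
  subst_map theta (subst_map eta x) = subst_map (fun i => subst eta (theta i)) x.
Proof. by apply/ffunP=> i; rewrite !ffunE weval_subst. Qed.

(* A bijective substitution map is a permutation of the finite set G^k, so its
   inverse is one of its powers, hence again a substitution map. *)
Lemma subst_map_inv theta : injective (subst_map theta) ->
  exists eta, cancel (subst_map theta) (subst_map eta) /\ cancel (subst_map eta) (subst_map theta).
Proof.
move=> inj_theta; pose pi := perm inj_theta.
have pi_pow m : exists eta, pi ^+ m =1 subst_map eta.
  elim: m => [|m [eta IH]]; first by exists (@gen k) => x; rewrite perm1 subst_map_gen.
  exists (fun i => subst eta (theta i)) => x.
  by rewrite expgSr permM IH permE subst_map_comp.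
have [eta etaE] := pi_pow #[pi].-1; rewrite -invg_expg in etaE.
by exists eta; split=> x; rewrite -etaE -[subst_map theta _]permE ?permK ?permKV.
Qed.

Lemma mem_FkG_subst_map theta u : in_FkG [ffun x => wmap gT u (subst_map theta x)].
Proof. by exists (subst theta u); apply/ffunP=> x; rewrite !ffunE weval_subst. Qed.

Lemma FkG_automorphic_subst_map theta i : injective (subst_map theta) ->
  FkG_automorphic gT (theta i) (gen i).
Proof.
case/subst_map_inv=> eta [thetaK etaK].
exists (fun f => [ffun x => f (subst_map eta x)]); split; last first.
  by apply/ffunP=> x; rewrite !ffunE weval_gen -[in RHS](etaK x) ffunE.
split.
- by move=> _ [u ->]; apply: mem_FkG_subst_map.
- by move=> f g _ _; apply/ffunP=> x; rewrite !ffunE.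
- move=> f g _ _ /ffunP fg; apply/ffunP=> x.
  by have := fg (subst_map theta x); rewrite !ffunE thetaK.
- move=> _ [u ->]; exists [ffun x => wmap gT u (subst_map theta x)].
    exact: mem_FkG_subst_map.
  by apply/ffunP=> x; rewrite !ffunE etaK.
Qed.

Lemma ident_distr_subst_map theta i : injective (subst_map theta) ->
  ident_distr gT (theta i) (gen i).
Proof.
move=> inj_theta g; rewrite /Pw; congr ((_ %:R) / _)%R.
rewrite -(card_preimset [set y | weval y (gen i) == g] inj_theta).
by apply: eq_card => x; rewrite !inE weval_gen ffunE.
Qed.

End SubstitutionMaps.

(* gcd(n, e_1(w), ..., e_k(w)) = 1, stated prime by prime. *)
Definition exp_sums_coprime n k (w : word k) : Prop :=
  forall p, prime p -> p %| n -> exists i : 'I_k, ~~ (p %| exp_sum n w i).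

Section InjectiveSubstitution.
Variable gT : finGroupType.
Local Open Scope group_scope.
Hypothesis central_comm : forall x y z : gT, commute [~ x, y] z.
Local Notation n := #|gT|.
Variables (k : nat) (w : word k).
Hypothesis w_cop : exp_sums_coprime n w.

(* The images of the x_i (i > 0) determine the b_i with x_i = b_i x_0^T_i, and then
   w(x) = x_0^E [x_0, z] c determines x_0. *)
Lemma exists_injective_subst_map : 1 < n ->
  exists theta (i0 : 'I_k),
    [/\ nat_of_ord i0 = 0, theta i0 = w & injective (@subst_map gT k theta)].
Proof.
move=> n_gt1; have [i1 _] := w_cop (pdiv_prime n_gt1) (pdiv_dvd n).
have k_gt0 : 0 < k by case: k i1 => // -[].
pose i0 : 'I_k := Ordinal k_gt0.
have [T T0 coT] : exists2 T : nat -> nat, T 0 = 1%N &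
    coprime (\sum_(j < k) T j * exp_sum n w j) n.
  apply: (coprime_combination (card_finGroup_gt0 gT)) => p p_pr pn.
  by have [i ?] := w_cop p_pr pn; exists i.
pose theta i := if i == i0 then w else gen i ++ nseq (T i) (i0, true).
exists theta, i0; split; rewrite /theta ?eqxx // => x1 x2 eq12.
pose b (x : {ffun 'I_k -> gT}) := [ffun i => if i == i0 then 1 else x i * (x i0)^-1 ^+ T i].
have bE x : x = [ffun i => b x i * x i0 ^+ T i].
  apply/ffunP=> i; rewrite !ffunE; case: eqP => [->|_]; first by rewrite T0 mul1g.
  by rewrite expgVn mulgKV.
have b12 : b x1 = b x2.
  apply/ffunP=> i; move/ffunP/(_ i): eq12; rewrite !ffunE /theta.
  by case: eqP => // _; rewrite !weval_cat !weval_gen !weval_nseq_inv.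
have [z [c w_form]] := class2_form central_comm (fun i : 'I_k => T i) (b x2) w.
suff x12 : x1 i0 = x2 i0 by rewrite (bE x1) (bE x2) b12 x12.
apply: (class2_form_inj central_comm coT (z := z) (c := c)); rewrite /= -!w_form.
move/ffunP/(_ i0): eq12; rewrite !ffunE /theta eqxx.
by rewrite -{1}b12 -(bE x1) -(bE x2).
Qed.

End InjectiveSubstitution.

Section PrimitiveWords.
Variable gT : finGroupType.
Local Open Scope group_scope.

Lemma primitive_word_surj k (v : word k) : primitive_word v -> word_surj gT v.
Proof.
case=> phi [psi [[_ psiK] [i0 [_ phi_v]]]] g.
pose y : {ffun 'I_k -> gT} := [ffun j => if j == i0 then g else 1].
exists [ffun j => weval y (psi j)].
by rewrite -(feq_weval _ phi_v) -weval_subst (feq_weval _ (psiK i0)) weval_gen ffunE eqxx.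
Qed.

Lemma Pw_gt0 k (v : word k) (g : gT) : (exists x, weval x v = g) -> (0 < Pw v g)%R.
Proof.
case=> x xv; rewrite /Pw Num.Theory.divr_gt0 // Num.Theory.ltr0n.
  by apply/card_gt0P; exists x; rewrite inE xv.
by rewrite expn_gt0 card_finGroup_gt0.
Qed.

Lemma ident_distr_primitive_surj k m (w : word k) (v : word m) :
  primitive_word v -> ident_distr gT w v -> word_surj gT w.
Proof.
move=> v_prim wv g; have := Pw_gt0 (primitive_word_surj v_prim g).
rewrite -wv /Pw Num.Theory.pmulr_lgt0 ?Num.Theory.invr_gt0 ?Num.Theory.ltr0n //.
  by case/card_gt0P=> x; rewrite inE => /eqP; exists x.
by rewrite expn_gt0 card_finGroup_gt0.
Qed.

End PrimitiveWords.

Section NilpotentQuotient.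
Variable gT : finGroupType.
Local Open Scope group_scope.

(* G / O_p'(G) is a nontrivial p-group; take the preimage of its Frattini subgroup. *)
Lemma nilpotent_proper_sub_der_expg p :
    nilpotent [set: gT] -> prime p -> p %| #|gT| ->
  exists H : {group gT}, [/\ H \proper [set: gT], [set: gT]^`(1) \subset H
                           & forall g : gT, g ^+ p \in H].
Proof.
set G := [set: gT] => nilG p_pr pG; pose Q := 'O_p^'(G).
have nQG : G \subset 'N(Q) := normal_norm (pcore_normal _ _).
have /and3P[sQG p'Q p'iQ] := nilpotent_pcore_Hall p^' nilG.
have pGQ : p.-group (G / Q) by rewrite /pgroup card_quotient // -pnatNK.
have ntGQ : G / Q != 1.
  apply: contraL pG => /eqP GQ1; have iQ1 : #|G : Q| = 1%N by rewrite -card_quotient // GQ1 cards1.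
  by move: p'Q; rewrite /pgroup -[#|Q|]muln1 -iQ1 Lagrange // cardsT p'natE.
exists (coset Q @*^-1 'Phi(G / Q))%G; split.
- rewrite properT; apply: contraTneq (Phi_proper ntGQ) => H_G.
  rewrite properE negb_and negbK; apply/orP; right.
  apply/subsetP=> _ /morphimP[x _ Gx ->].
  have : x \in (coset Q @*^-1 'Phi(G / Q))%G by rewrite H_G inE.
  by case/morphpreP.
- rewrite /= -sub_quotient_pre ?(subset_trans (der_sub 1 G)) //.
  by rewrite quotient_der // (Phi_joing pGQ) joing_subl.
- move=> g; have Ng := subsetP nQG g (in_setT g).
  have GQg : coset Q g \in G / Q by rewrite mem_quotient.
  have NPhi_g : coset Q g \in 'N('Phi(G / Q)) := subsetP (normal_norm (Phi_normal _)) _ GQg.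
  have [_ expp] := abelemP p_pr (Phi_quotient_abelem pGQ).
  apply/morphpreP; split; first by rewrite groupX.
  rewrite morphX //; apply: coset_idr; first by rewrite groupX.
  by rewrite morphX // expp // mem_quotient.
Qed.

End NilpotentQuotient.

Section WordMapGroup.
Variables (gT : finGroupType) (k : nat).
Local Open Scope group_scope.
Local Notation wmapT := (wmap_type gT k).

HB.instance Definition _ := Finite.on wmapT.

Definition wmap_one : wmapT := [ffun => 1].
Definition wmap_inv (f : wmapT) : wmapT := [ffun x => (f x)^-1].

Lemma fmulA : associative (@fmul gT k).
Proof. by move=> f g h; apply/ffunP=> x; rewrite !ffunE mulgA. Qed.

Lemma fmul1 : left_id wmap_one (@fmul gT k).
Proof. by move=> f; apply/ffunP=> x; rewrite !ffunE mul1g. Qed.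

Lemma fmulV : left_inverse wmap_one wmap_inv (@fmul gT k).
Proof. by move=> f; apply/ffunP=> x; rewrite !ffunE mulVg. Qed.

HB.instance Definition _ := Finite_isGroup.Build wmapT fmulA fmul1 fmulV.

Lemma wmap_mulE (f g : wmapT) x : (f * g) x = f x * g x.
Proof. exact: ffunE. Qed.

Lemma wmap1E x : (1 : wmapT) x = 1.
Proof. exact: ffunE. Qed.

Lemma wmap_invE (f : wmapT) x : f^-1 x = (f x)^-1.
Proof. exact: ffunE. Qed.

Definition FkG : {group wmapT} := <<[set wmap gT (gen i) | i : 'I_k]>>%G.

Lemma weval_wmap_gen (u : word k) : weval [ffun i => wmap gT (gen i)] u = wmap gT u.
Proof.
apply/ffunP=> x; rewrite [RHS]ffunE; elim: u => [|a u IH]; first by rewrite wmap1E.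
rewrite !weval_cons wmap_mulE IH /leval !ffunE.
by case: a.2; rewrite ?wmap_invE ffunE weval_gen.
Qed.

Lemma in_FkGP (f : wmapT) : in_FkG f <-> f \in FkG.
Proof.
split=> [[u ->]|].
  by rewrite -weval_wmap_gen; apply: mem_weval => i; rewrite ffunE mem_gen ?imset_f.
case/gen_prodgP=> m [c cA ->] {f}; elim: m c cA => [|m IH] c cA.
  by exists [::]; rewrite big_ord0; apply/ffunP=> x; rewrite !ffunE.
rewrite big_ord_recr /=; have [u ->] := IH _ (fun i => cA (widen_ord (leqnSn m) i)).
have /imsetP[j _ ->] := cA ord_max.
by exists (u ++ gen j); apply/ffunP=> x; rewrite !ffunE weval_cat.
Qed.

Variable p : nat.

Definition FkG_der_exp : {group wmapT} := (FkG^`(1) <*> <<[set f ^+ p | f in FkG]>>)%G.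
Local Notation V := FkG_der_exp.

Lemma expg_FkG_sub : [set f ^+ p | f in FkG] \subset FkG.
Proof. by apply/subsetP=> _ /imsetP[f Ff ->]; apply: groupX. Qed.

Lemma FkG_der_exp_sub : V \subset FkG.
Proof. by rewrite join_subG der_sub gen_subG expg_FkG_sub. Qed.

Lemma FkG_norm_der_exp : FkG \subset 'N(V).
Proof.
apply: normsY; first exact: normal_norm (der_normal 1 FkG).
apply: norms_gen; apply/subsetP=> x Fx; rewrite inE; apply/subsetP=> y.
rewrite mem_conjg => /imsetP[f Ff eq_f].
have -> : y = (f ^ x) ^+ p by rewrite -conjXg -eq_f conjgKV.
by apply: imset_f; rewrite groupJ ?groupV.
Qed.

Lemma wmap_in_der_exp (w : word k) :
  p %| #|gT| -> (forall i : 'I_k, p %| exp_sum #|gT| w i) -> wmap gT w \in V.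
Proof.
move=> p_n p_w; rewrite -weval_wmap_gen.
have genF i : wmap gT (gen i) \in FkG by rewrite mem_gen ?imset_f.
have genN i : wmap gT (gen i) \in 'N(V) := subsetP FkG_norm_der_exp _ (genF i).
apply: coset_idr; first by apply: mem_weval => i; rewrite ffunE.
have abFV : abelian (FkG / V) by rewrite sub_der1_abelian ?joing_subl.
pose y := [ffun i => coset_morphism V (wmap gT (gen i))].
have yF i : y i \in FkG / V by rewrite ffunE mem_quotient.
have yp m i : p %| m -> y i ^+ m = 1.
  case/dvdnP=> q ->; rewrite mulnC expgM ffunE -morphX //.
  have -> : coset_morphism V (wmap gT (gen i) ^+ p) = 1.
    by apply/coset_id/(subsetP (joing_subr _ _))/mem_gen/imset_f.
  exact: expg1n.
rewrite morph_weval => [|i]; last by rewrite ffunE.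
rewrite [[ffun i => _]](_ : _ = y); last by apply/ffunP=> i; rewrite !ffunE.
rewrite (weval_commuting _ (card_finGroup_gt0 gT)) => [|i j|i]; last 2 first.
- exact: (centsP abFV).
- exact: yp.
by rewrite big1 // => i _; apply: yp.
Qed.

Lemma FkG_aut_der_exp (alpha : wmapT -> wmapT) f :
  FkG_aut alpha -> f \in V -> alpha f \in V.
Proof.
case=> alphaF alphaM _ _ Vf.
have alpha_morphic : morphic FkG alpha.
  by apply/morphicP=> g h /in_FkGP Fg /in_FkGP Fh; apply: alphaM.
pose phi := morphm_morphism alpha_morphic.
have phiF : phi @* FkG \subset FkG.
  by apply/subsetP=> _ /morphimP[g _ /in_FkGP/alphaF/in_FkGP Fg ->]; rewrite /= morphmE.
have phiV : phi @* V \subset V.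
  rewrite morphimY ?der_sub ?gen_subG ?expg_FkG_sub // subUset morphim_der //.
  rewrite morphim_gen ?expg_FkG_sub // (subset_trans (dergS 1 phiF)) ?joing_subl //=.
  rewrite (subset_trans _ (joing_subr _ _)) // genS //.
  apply/subsetP=> _ /morphimP[_ _ /imsetP[g Fg ->] ->].
  by rewrite morphX //; apply: imset_f; rewrite (subsetP phiF) ?mem_morphim.
have -> : alpha f = phi f by rewrite /= morphmE.
by rewrite (subsetP phiV) ?mem_morphim ?(subsetP FkG_der_exp_sub).
Qed.

Lemma der_exp_eval_sub (H : {group gT}) f x : [set: gT]^`(1) \subset H ->
  (forall g : gT, g ^+ p \in H) -> f \in V -> f x \in H.
Proof.
move=> derH expH Vf.
have eval_morphic : morphic [set: wmapT] (fun f : wmapT => f x).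
  by apply/morphicP=> g h _ _; rewrite wmap_mulE.
pose ev := morphm_morphism eval_morphic.
have evV : ev @* V \subset H.
  rewrite morphimY ?subsetT // join_subG morphim_der ?subsetT //.
  rewrite (subset_trans (dergS 1 (subsetT _))) // morphim_gen ?subsetT // gen_subG.
  by apply/subsetP=> _ /morphimP[_ _ /imsetP[g _ ->] ->]; rewrite morphX ?inE.
have -> : f x = ev f by rewrite /= morphmE.
by rewrite (subsetP evV) ?mem_morphim ?inE.
Qed.

End WordMapGroup.

Section CorollaryProof.
Variable gT : finGroupType.
Local Open Scope group_scope.
Local Notation n := #|gT|.

Lemma nil_class2_central_comm : nil_class [set: gT] = 2 ->
  forall x y z : gT, commute [~ x, y] z.
Proof.
move=> class2 x y z; have /subsetP derZ : [set: gT]^`(1) \subset 'Z([set: gT]).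
  by rewrite -nil_class2 class2.
by have /centerP[_ cz] := derZ _ (mem_commg (in_setT x) (in_setT y)); apply: cz; rewrite inE.
Qed.

Lemma nil_class2_card_gt1 : nil_class [set: gT] = 2 -> 1 < n.
Proof.
move=> class2; rewrite -cardsT (cardG_gt1 [set: gT]%G).
by have := nil_class0 [set: gT]%G; rewrite class2 => <-.
Qed.

Lemma not_exp_sums_coprime_der_exp k (w : word k) : ~ exp_sums_coprime n w ->
  exists2 p, prime p /\ p %| n & wmap gT w \in FkG_der_exp gT k p.
Proof.
move=> not_cop; apply: NNPP => noS; apply: not_cop => p p_pr pn.
apply: NNPP => all_p; apply: noS; exists p => //; apply: wmap_in_der_exp => // i.
by apply: NNPP => np_i; apply: all_p; exists i; apply/negP.
Qed.

Lemma der_exp_not_surj k p (f : wmap_type gT k) : nilpotent [set: gT] -> prime p -> p %| n ->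
  f \in FkG_der_exp gT k p -> exists g, forall x, f x != g.
Proof.
move=> nilG p_pr pn der_exp_f; have [H [/properP[_ [g _ Hg]] derH expH]] :=
  nilpotent_proper_sub_der_expg nilG p_pr pn.
by exists g => x; apply: contraNneq Hg => <-; apply: der_exp_eval_sub der_exp_f.
Qed.

Lemma exp_sums_coprime_surj k (w : word k) : nilpotent [set: gT] ->
  word_surj gT w -> exp_sums_coprime n w.
Proof.
move=> nilG w_surj; apply: NNPP => /not_exp_sums_coprime_der_exp[p [p_pr pn] Vw].
have [g notg] := der_exp_not_surj nilG p_pr pn Vw; have [x wx] := w_surj g.
by have := notg x; rewrite ffunE wx eqxx.
Qed.

Lemma exp_sums_coprime_automorphic k (w v : word k) : nilpotent [set: gT] ->
  primitive_word v -> FkG_automorphic gT w v -> exp_sums_coprime n w.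
Proof.
move=> nilG v_prim [alpha [alpha_aut alpha_wv]].
apply: NNPP => /not_exp_sums_coprime_der_exp[p [p_pr pn] Vw].
have Vv : wmap gT v \in FkG_der_exp gT k p by rewrite -alpha_wv FkG_aut_der_exp.
have [g notg] := der_exp_not_surj nilG p_pr pn Vv; have [x vx] := primitive_word_surj v_prim g.
by have := notg x; rewrite ffunE vx eqxx.
Qed.

Lemma exp_sums_coprime_automorphic_distr k (w : word k) : nil_class [set: gT] = 2 ->
    exp_sums_coprime n w ->
  (exists v : word k, primitive_word v /\ FkG_automorphic gT w v) /\
  (exists m (v : word m), primitive_word v /\ ident_distr gT w v).
Proof.
move=> class2 cop; have [theta [i0 [i00 <- inj_theta]]] :=
  exists_injective_subst_map (nil_class2_central_comm class2) cop (nil_class2_card_gt1 class2).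
have gen_prim := primitive_gen0 i00.
split; [exists (gen i0) | exists k, (gen i0)]; split => //.
  exact: FkG_automorphic_subst_map.
exact: ident_distr_subst_map.
Qed.

End CorollaryProof.

Theorem corollary3p8 (gT : finGroupType) (k : nat) (w : word k) :
  nilpotent [set: gT] -> nil_class [set: gT] = 2 ->
  [<-> word_surj gT w;
       exists v : word k, primitive_word v /\ FkG_automorphic gT w v;
       exists (m : nat) (v : word m), primitive_word v /\ ident_distr gT w v].
Proof.
move=> nilG class2; have cop_ii_iii := @exp_sums_coprime_automorphic_distr gT k w class2.
tfae=> [w_surj | [v [v_prim w_v]] | [m [v [v_prim w_v]]]].
- exact: (cop_ii_iii (exp_sums_coprime_surj nilG w_surj)).1.
- exact: (cop_ii_iii (exp_sums_coprime_automorphic nilG v_prim w_v)).2.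
- exact: ident_distr_primitive_surj v_prim w_v.
Qed.
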